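(* Let $R>0$ and let $\mathbf L\colon \mathbb R^n\times\mathbb R^m\to\mathbb R$ be an $R$-smooth convex-concave function that has a saddle point $\mathbf z^\star$. Let $\alpha>0$ satisfy $$1-3\alpha R-\alpha^2R^2-\alpha^3R^3\ge 0\quad\text{and}\quad 1-8\alpha R+\alpha^2R^2-2\alpha^3R^3\ge 0.$$ Let $\mathbf z^0\in\mathbb R^n\times\mathbb R^m$ be arbitrary, and define for $k\ge 0$ the EAG-C iterates $$\mathbf z^{k+1/2}=\mathbf z^k+\tfrac{1}{k+2}(\mathbf z^0-\mathbf z^k)-\alpha\,\mathbf G(\mathbf z^k),\qquad \mathbf z^{k+1}=\mathbf z^k+\tfrac{1}{k+2}(\mathbf z^0-\mathbf z^k)-\alpha\,\mathbf G(\mathbf z^{k+1/2}).$$ Then for all $k\ge 0$, $$\|\nabla\mathbf L(\mathbf z^k)\|^2\le \frac{4(1+\alpha R+\alpha^2R^2)}{\alpha^2(1+\alpha R)}\,\frac{\|\mathbf z^0-\mathbf z^\star\|^2}{(k+1)^2}.$$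
   Context: Write $\mathbf z=(\mathbf x,\mathbf y)\in\mathbb R^n\times\mathbb R^m$. $\mathbf L$ is convex-concave if $\mathbf L(\cdot,\mathbf y)$ is convex for each $\mathbf y$ and $\mathbf L(\mathbf x,\cdot)$ is concave for each $\mathbf x$. A saddle point $(\mathbf x^\star,\mathbf y^\star)$ satisfies $\mathbf L(\mathbf x^\star,\mathbf y)\le\mathbf L(\mathbf x^\star,\mathbf y^\star)\le\mathbf L(\mathbf x,\mathbf y^\star)$ for all $\mathbf x,\mathbf y$. For differentiable $\mathbf L$, the saddle operator is $\mathbf G(\mathbf z)=(\nabla_{\mathbf x}\mathbf L(\mathbf x,\mathbf y),-\nabla_{\mathbf y}\mathbf L(\mathbf x,\mathbf y))$. $\mathbf L$ is $R$-smooth if $\mathbf L$ is differentiable and $\mathbf G$ is $R$-Lipschitz continuous. Note $\|\nabla\mathbf L(\mathbf z)\|=\|\mathbf G(\mathbf z)\|$. *)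

From HB Require Import structures.
From mathcomp Require Import all_boot all_order all_algebra.
From mathcomp Require Import all_classical all_reals all_analysis.
Set Implicit Arguments. Unset Strict Implicit. Unset Printing Implicit Defensive.
Import Order.TTheory GRing.Theory Num.Theory.
Import numFieldNormedType.Exports.
Local Open Scope ring_scope.

(* Points z = (x, y) of R^n x R^m are encoded as row vectors 'rV_(n+m),
   x = lsubmx z, y = rsubmx z, z = row_mx x y. *)

Definition enorm (R : realType) (N : nat) (v : 'rV[R]_N) : R :=
  Num.sqrt (\sum_(i < N) v 0 i ^+ 2).

Definition grad (R : realType) (N : nat) (f : 'rV[R]_N -> R) (z : 'rV[R]_N)
  : 'rV[R]_N := \row_(i < N) 'D_(delta_mx 0 i) f z.

Definition saddle_op (R : realType) (n m : nat) (L : 'rV[R]_(n + m) -> R)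
  (z : 'rV[R]_(n + m)) : 'rV[R]_(n + m) :=
  row_mx (lsubmx (grad L z)) (- rsubmx (grad L z)).

Definition convex_concave (R : realType) (n m : nat) (L : 'rV[R]_(n + m) -> R)
  : Prop :=
  (forall (y : 'rV[R]_m) (x1 x2 : 'rV[R]_n) (t : R), 0 <= t <= 1 ->
     L (row_mx (t *: x1 + (1 - t) *: x2) y)
       <= t * L (row_mx x1 y) + (1 - t) * L (row_mx x2 y)) /\
  (forall (x : 'rV[R]_n) (y1 y2 : 'rV[R]_m) (t : R), 0 <= t <= 1 ->
     t * L (row_mx x y1) + (1 - t) * L (row_mx x y2)
       <= L (row_mx x (t *: y1 + (1 - t) *: y2))).

Definition smooth_cc (R : realType) (n m : nat) (Rs : R)
  (L : 'rV[R]_(n + m) -> R) : Prop :=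
  (forall z, differentiable L z) /\
  (forall z w, enorm (saddle_op L z - saddle_op L w) <= Rs * enorm (z - w)).

Definition saddle_point (R : realType) (n m : nat) (L : 'rV[R]_(n + m) -> R)
  (zs : 'rV[R]_(n + m)) : Prop :=
  forall (x : 'rV[R]_n) (y : 'rV[R]_m),
    L (row_mx (lsubmx zs) y) <= L zs /\ L zs <= L (row_mx x (rsubmx zs)).

Fixpoint eagc (R : realType) (n m : nat) (L : 'rV[R]_(n + m) -> R) (alpha : R)
  (z0 : 'rV[R]_(n + m)) (k : nat) : 'rV[R]_(n + m) :=
  match k with
  | 0%N => z0
  | k'.+1 =>
      let zk := eagc L alpha z0 k' in
      let zh := zk + (k'.+2%:R)^-1 *: (z0 - zk) - alpha *: saddle_op L zk in
      zk + (k'.+2%:R)^-1 *: (z0 - zk) - alpha *: saddle_op L zh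
  end.

(* The argument is a Lyapunov one.  With A_k = (k+1)(4k+5)/8, the potential
     V_k = alpha A_k |G(z^k)|^2 + (k+1) <G(z^k), z^k - z^0>
   does not increase along EAG-C: V_k - V_(k+1), minus (k+1)(k+2) times the
   monotonicity gap of G between z^k and z^(k+1) and minus alpha (k+2)^2 times
   the Lipschitz slack between z^(k+1) and z^(k+1/2), is coordinatewise a
   quadratic form in G(z^k), G(z^(k+1/2)), G(z^(k+1)) that is positive
   semidefinite as soon as (alpha R)^2 <= 1/49.  Then
   V_0 = 5/8 alpha |G(z^0)|^2 <= 5/8 alpha R^2 |z^0 - z⋆|^2 because G(z⋆) = 0,
   while <G(z^k), z^k - z⋆> >= 0 and Young's inequality bound V_k from below
   by alpha A_k/2 |G(z^k)|^2 - (k+1)^2/(2 alpha A_k) |z^0 - z⋆|^2. *)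

From HB Require Import structures.
From mathcomp Require Import all_boot all_order all_algebra.
From mathcomp Require Import all_classical all_reals all_analysis.
From mathcomp Require Import ring lra.
Import Order.TTheory GRing.Theory Num.Theory.
Import numFieldNormedType.Exports.
Local Open Scope ring_scope.

Section Dot.
Context {R : realFieldType}.

Definition dot {N : nat} (u v : 'rV[R]_N) : R := \sum_i u 0 i * v 0 i.

Context {N : nat}.
Implicit Types u v w : 'rV[R]_N.

Lemma dotC u v : dot u v = dot v u.
Proof. by apply: eq_bigr => i _; rewrite mulrC. Qed.

Lemma dot0l v : dot 0 v = 0.
Proof. by rewrite /dot big1 // => i _; rewrite mxE mul0r. Qed.

Lemma dotNl u v : dot (- u) v = - dot u v.
Proof. by rewrite /dot -sumrN; apply: eq_bigr => i _; rewrite mxE mulNr. Qed.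

Lemma dotNr u v : dot u (- v) = - dot u v.
Proof. by rewrite dotC dotNl dotC. Qed.

Lemma dotDr u v w : dot u (v + w) = dot u v + dot u w.
Proof. by rewrite /dot -big_split; apply: eq_bigr => i _; rewrite mxE mulrDr. Qed.

Lemma dotBr u v w : dot u (v - w) = dot u v - dot u w.
Proof. by rewrite dotDr dotNr. Qed.

Lemma dotxx_ge0 v : 0 <= dot v v.
Proof. by apply: sumr_ge0 => i _; rewrite -expr2 sqr_ge0. Qed.

Lemma dotxx_eq0 v : (dot v v == 0) = (v == 0).
Proof.
apply/idP/eqP => [|->]; last by rewrite dot0l.
rewrite psumr_eq0 => [/allP v0|i _]; last by rewrite -expr2 sqr_ge0.
apply/rowP => i; rewrite mxE.
by have /implyP/(_ isT) := v0 i (mem_index_enum _); rewrite mulf_eq0 orbb => /eqP.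
Qed.

Lemma dot_young u v (b e : R) : 0 < e ->
  0 <= b * dot u v + e / 2 * dot u u + b ^+ 2 / (2 * e) * dot v v.
Proof.
move=> e_gt0.
have -> : b * dot u v + e / 2 * dot u u + b ^+ 2 / (2 * e) * dot v v =
    \sum_i e / 2 * (u 0 i + b / e * v 0 i) ^+ 2.
  rewrite /dot !mulr_sumr -!big_split; apply: eq_bigr => i _ /=.
  by field; rewrite gt_eqF.
by apply: sumr_ge0 => i _; rewrite mulr_ge0 ?sqr_ge0 ?divr_ge0 ?ltW.
Qed.

End Dot.

Lemma dot_row_mx (R : realFieldType) (n m : nat) (u u' : 'rV[R]_n) (v v' : 'rV[R]_m) :
  dot (row_mx u v) (row_mx u' v') = dot u u' + dot v v'.
Proof.
by rewrite /dot big_split_ord; congr (_ + _); apply: eq_bigr => i _;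
  rewrite ?row_mxEl ?row_mxEr.
Qed.

Section Potential.
Context {R : realFieldType}.

Definition eag_weight (b : R) : R := (b + 1) * (4 * (b + 1) + 1) / 8.

Definition eag_potential {N : nat} (alpha b : R) (z0 z g : 'rV[R]_N) : R :=
  alpha * eag_weight b * dot g g + (b + 1) * dot g (z - z0).

Definition eag_quadratic (b s g h g' : R) : R :=
  eag_weight b * g ^+ 2 - eag_weight (b + 1) * g' ^+ 2 + (b + 2) ^+ 2 * g' * h
  - (b + 1) * (b + 2) * g * h - (b + 2) ^+ 2 * s * (g - h) ^+ 2
  + (b + 2) ^+ 2 * (g' - h) ^+ 2.

Lemma eag_quadratic_ge0 (b s g h g' : R) :
  0 <= b -> 0 <= s -> s <= 1/49 -> 0 <= eag_quadratic b s g h g'.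
Proof.
move=> b_ge0 s_ge0 s_small.
set Q := eag_quadratic b s g h g'.
(* Complete the square in g', then in g; what remains is the discriminant
   4XZ - Y^2 times h^2. *)
pose u := b + 2.
pose c := u ^+ 2 - u * (4 * u + 1) / 8.
pose A := eag_weight b.
pose X := 4 * c * (A - u ^+ 2 * s).
pose Y := 4 * c * (2 * u ^+ 2 * s - (b + 1) * u).
pose Z := 4 * c * u ^+ 2 * (1 - s) - u ^+ 4.
have c_gt0 : 0 < c.
  by rewrite (_ : c = 7/4 + 15/8 * b + b ^+ 2 / 2); [nra | rewrite /c /u; field].
have X_gt0 : 0 < X.
  rewrite /X !mulr_gt0 // subr_gt0 /A /eag_weight /u.
  have : (b + 2) ^+ 2 * s <= (b + 2) ^+ 2 / 49 by rewrite ler_pM2l ?exprn_gt0 //; lra.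
  nra.
have discr_ge0 : 0 <= 4 * X * Z - Y ^+ 2.
  have -> : 4 * X * Z - Y ^+ 2 =
      (14 + 50 * b + 73 * b ^+ 2 + 56 * b ^+ 3 + 191/8 * b ^+ 4 + 43/8 * b ^+ 5
       + 1/2 * b ^+ 6)
      - s * (266 + 838 * b + 1099 * b ^+ 2 + 768 * b ^+ 3 + 2413/8 * b ^+ 4
             + 505/8 * b ^+ 5 + 11/2 * b ^+ 6).
    by rewrite /X /Y /Z /c /A /eag_weight /u; field.
  set D := (266 + 838 * b + _ + _ + _ + _ + _).
  have b2 := exprn_ge0 2 b_ge0; have b3 := exprn_ge0 3 b_ge0.
  have b4 := exprn_ge0 4 b_ge0; have b5 := exprn_ge0 5 b_ge0.
  have b6 := exprn_ge0 6 b_ge0.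
  have : s * D <= D / 49 by rewrite mulrC ler_wpM2l //; rewrite /D; lra.
  rewrite /D; lra.
have sos : 16 * c * X * Q = 4 * X * (2 * c * g' - u ^+ 2 * h) ^+ 2
                            + (2 * X * g + Y * h) ^+ 2 + (4 * X * Z - Y ^+ 2) * h ^+ 2.
  by rewrite /Q /eag_quadratic /X /Y /Z /c /A /u /eag_weight; field.
have : 0 <= 16 * c * X * Q.
  rewrite sos; apply: addr_ge0; first apply: addr_ge0.
  - by rewrite mulr_ge0 ?sqr_ge0 // mulr_ge0 // ltW.
  - exact: sqr_ge0.
  - by rewrite mulr_ge0 ?sqr_ge0.
by rewrite pmulr_rge0 // mulr_gt0 // mulr_gt0.
Qed.

Lemma eag_step_coordE (alpha Rs b g h g' z z0 zh z' : R) :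
  zh = z + (b + 2)^-1 * (z0 - z) - alpha * g ->
  z' = z + (b + 2)^-1 * (z0 - z) - alpha * h ->
  0 <= b ->
  alpha * eag_weight b * (g * g) + (b + 1) * (g * (z - z0))
  - (alpha * eag_weight (b + 1) * (g' * g') + (b + 1 + 1) * (g' * (z' - z0)))
  - (b + 1) * (b + 2) * (g' * (z' - z) + g * (z - z'))
  - alpha * (b + 2) ^+ 2 * (Rs ^+ 2 * ((z' - zh) * (z' - zh)) - (g' - h) * (g' - h))
    = alpha * eag_quadratic b ((alpha * Rs) ^+ 2) g h g'.
Proof.
move=> -> -> b_ge0; rewrite /eag_quadratic /eag_weight; field.
by rewrite gt_eqF //; lra.
Qed.

Context {N : nat}.

Lemma eag_potential_step (alpha Rs b : R) (z0 z g h g' zh z' : 'rV[R]_N) :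
  zh = z + (b + 2)^-1 *: (z0 - z) - alpha *: g ->
  z' = z + (b + 2)^-1 *: (z0 - z) - alpha *: h ->
  0 <= b -> 0 < alpha -> (alpha * Rs) ^+ 2 <= 1/49 ->
  0 <= dot g' (z' - z) + dot g (z - z') ->
  dot (g' - h) (g' - h) <= Rs ^+ 2 * dot (z' - zh) (z' - zh) ->
  eag_potential alpha (b + 1) z0 z' g' <= eag_potential alpha b z0 z g.
Proof.
move=> Ezh Ez' b_ge0 alpha_gt0 small mono lip.
set lam := (b + 1) * (b + 2); set tau := alpha * (b + 2) ^+ 2.
have lam_ge0 : 0 <= lam by rewrite mulr_ge0 //; lra.
have tau_ge0 : 0 <= tau by rewrite mulr_ge0 ?sqr_ge0 ?ltW.
suff : 0 <= eag_potential alpha b z0 z g - eag_potential alpha (b + 1) z0 z' g'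
         - lam * (dot g' (z' - z) + dot g (z - z'))
         - tau * (Rs ^+ 2 * dot (z' - zh) (z' - zh) - dot (g' - h) (g' - h)).
  have := mulr_ge0 lam_ge0 mono; have := mulr_ge0 tau_ge0 (eqbRL (subr_ge0 _ _) lip).
  lra.
rewrite /eag_potential /dot !(mulrBr, mulrDr) !mulr_sumr -!(sumrB, big_split) /=.
apply: sumr_ge0 => i _.
have := @eag_step_coordE alpha Rs b (g 0 i) (h 0 i) (g' 0 i) (z 0 i) (z0 0 i)
  (zh 0 i) (z' 0 i).
rewrite Ezh Ez' !mxE /lam /tau => /(_ erefl erefl b_ge0).
have := eag_quadratic_ge0 b _ (g 0 i) (h 0 i) (g' 0 i) b_ge0 (sqr_ge0 _) small.
move=> /(mulr_ge0 (ltW alpha_gt0)).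
lra.
Qed.

Lemma eag_potential0 (alpha : R) (z0 g : 'rV[R]_N) :
  eag_potential alpha 0 z0 z0 g = alpha * (5/8) * dot g g.
Proof. by rewrite /eag_potential /eag_weight subrr dotC dot0l; field. Qed.

Lemma eag_potential_ge (alpha b : R) (z0 z zs g : 'rV[R]_N) :
  0 < alpha -> 0 <= b -> 0 <= dot g (z - zs) ->
  alpha * eag_weight b / 2 * dot g g
    - (b + 1) ^+ 2 / (2 * (alpha * eag_weight b)) * dot (z0 - zs) (z0 - zs)
    <= eag_potential alpha b z0 z g.
Proof.
move=> alpha_gt0 b_ge0 g_zs; set e := alpha * eag_weight b.
have e_gt0 : 0 < e by rewrite mulr_gt0 // divr_gt0 //; nra.
have young := dot_young g (zs - z0) (b + 1) _ e_gt0.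
rewrite -[zs - z0]opprB dotNr dotNl dotNr opprK in young.
rewrite /eag_potential -/e (_ : z - z0 = (z - zs) - (z0 - zs)); last first.
  by rewrite opprB addrA subrK.
have b1_ge0 : 0 <= b + 1 by lra.
have := mulr_ge0 b1_ge0 g_zs; rewrite (dotBr g (z - zs)); lra.
Qed.

End Potential.

Section Rate.
Context {R : realFieldType}.

Lemma stepsize_le (alpha Rs : R) : 0 <= alpha * Rs ->
  0 <= 1 - 8 * alpha * Rs + alpha ^+ 2 * Rs ^+ 2 - 2 * alpha ^+ 3 * Rs ^+ 3 ->
  alpha * Rs <= 1/7.
Proof.
have -> : 1 - 8 * alpha * Rs + alpha ^+ 2 * Rs ^+ 2 - 2 * alpha ^+ 3 * Rs ^+ 3
          = 1 - 8 * (alpha * Rs) + (alpha * Rs) ^+ 2 - 2 * (alpha * Rs) ^+ 3 by ring.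
move: (alpha * Rs) => y; nra.
Qed.

Lemma eag_rate_const_ge (alpha Rs : R) : 0 < alpha -> 0 <= Rs -> alpha * Rs <= 3/5 ->
  5/2 * Rs ^+ 2 + 4 / alpha ^+ 2
    <= 4 * (1 + alpha * Rs + alpha ^+ 2 * Rs ^+ 2) / (alpha ^+ 2 * (1 + alpha * Rs)).
Proof.
move=> alpha_gt0 Rs_ge0 small; rewrite -subr_ge0.
have y_ge0 : 0 <= alpha * Rs by rewrite mulr_ge0 // ltW.
have -> : 4 * (1 + alpha * Rs + alpha ^+ 2 * Rs ^+ 2) / (alpha ^+ 2 * (1 + alpha * Rs))
          - (5/2 * Rs ^+ 2 + 4 / alpha ^+ 2)
        = Rs ^+ 2 * (3/2 - 5/2 * (alpha * Rs)) / (1 + alpha * Rs).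
  by field; rewrite !gt_eqF //; lra.
by rewrite divr_ge0 ?mulr_ge0 ?sqr_ge0 //; lra.
Qed.

Lemma eag_rate_bound (alpha Rs b x D : R) :
  0 < alpha -> 0 <= Rs -> alpha * Rs <= 3/5 -> 0 <= b -> 0 <= D ->
  alpha * eag_weight b / 2 * x - (b + 1) ^+ 2 / (2 * (alpha * eag_weight b)) * D
    <= alpha * (5/8) * Rs ^+ 2 * D ->
  x <= 4 * (1 + alpha * Rs + alpha ^+ 2 * Rs ^+ 2) / (alpha ^+ 2 * (1 + alpha * Rs))
       * (D / (b + 1) ^+ 2).
Proof.
move=> alpha_gt0 Rs_ge0 small b_ge0 D_ge0.
set e := alpha * eag_weight b; set t := (b + 1) ^+ 2 => hyp.
have t_gt0 : 0 < t by rewrite exprn_gt0 //; lra.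
have e_ge : alpha * t <= 2 * e by rewrite /e /t /eag_weight; nra.
have e_gt0 : 0 < e by have := mulr_gt0 alpha_gt0 t_gt0; lra.
have {hyp} hx : e ^+ 2 * x <= (2 * e * (alpha * (5/8) * Rs ^+ 2) + t) * D.
  have := ler_wpM2l (ltW (mulr_gt0 (ltr0n _ 2) e_gt0)) hyp.
  have -> : 2 * e * (e / 2 * x - t / (2 * e) * D) = e ^+ 2 * x - t * D.
    by field; rewrite gt_eqF.
  lra.
rewrite -(ler_pM2l (exprn_gt0 2 e_gt0)); apply: (le_trans hx).
apply: (@le_trans _ _ (e ^+ 2 * ((5/2 * Rs ^+ 2 + 4 / alpha ^+ 2) * (D / t)))).
  rewrite -subr_ge0.
  have -> : e ^+ 2 * ((5/2 * Rs ^+ 2 + 4 / alpha ^+ 2) * (D / t))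
            - (2 * e * (alpha * (5/8) * Rs ^+ 2) + t) * D
          = D / (t * alpha ^+ 2) * (2 * e - alpha * t)
            * (5/4 * alpha ^+ 2 * Rs ^+ 2 * e + (2 * e + alpha * t)).
    by field; rewrite !gt_eqF.
  have c_ge0 : 0 <= 5/4 * alpha ^+ 2 * Rs ^+ 2 * e.
    by rewrite !mulr_ge0 ?sqr_ge0 ?(ltW e_gt0) //; lra.
  have at_gt0 : 0 < alpha * t by rewrite mulr_gt0.
  apply: mulr_ge0; [apply: mulr_ge0 | lra].
  - by rewrite divr_ge0 // ltW // mulr_gt0 // exprn_gt0.
  - by rewrite subr_ge0.
rewrite ler_wpM2l ?sqr_ge0 // ler_wpM2r ?divr_ge0 ?(ltW t_gt0) //.
exact: eag_rate_const_ge.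
Qed.

End Rate.
Section DirectionalDerivative.
Variables (R : realType) (V : normedModType R) (z v : V).

Lemma derive_le_of_increment (f : V -> R) (c : R) : derivable f z v ->
  (forall h : R, 0 < h < 1 -> f (h *: v + z) - f z <= h * c) -> 'D_v f z <= c.
Proof.
move=> df incr; apply: (cvgr_to_le (cvg_dnbhs_at_right df)).
near=> h.
have h_gt0 : 0 < h by near: h; exact: nbhs_right_gt.
have h_lt1 : h < 1 by near: h; exact: nbhs_right_lt.
rewrite /= /shift -[c](mulKf (lt0r_neq0 h_gt0)) [_ *: _]/(_ * _).
by rewrite ler_pM2l ?invr_gt0 // incr ?h_gt0.
Unshelve. all: by end_near. Qed.

Lemma derive_ge_of_increment (f : V -> R) (c : R) : derivable f z v ->
  (forall h : R, 0 < h < 1 -> h * c <= f (h *: v + z) - f z) -> c <= 'D_v f z.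
Proof.
move=> df incr; rewrite -lerN2 -deriveN //.
apply: derive_le_of_increment (derivableN df) _ => h /incr.
rewrite !fctE; lra.
Qed.

End DirectionalDerivative.

Lemma derive_grad (R : realType) (N : nat) (f : 'rV[R]_N -> R) (z v : 'rV[R]_N) :
  differentiable f z -> 'D_v f z = dot v (grad f z).
Proof.
move=> df; rewrite deriveE // {1}(row_sum_delta v) linear_sum.
by apply: eq_bigr => i _; rewrite linearZ /= mxE deriveE.
Qed.

Lemma enorm_sqr (R : realType) (N : nat) (v : 'rV[R]_N) : enorm v ^+ 2 = dot v v.
Proof. by rewrite sqr_sqrtr // dotxx_ge0. Qed.

Section SaddleOperator.
Context {R : realType} {n m : nat} {L : 'rV[R]_(n + m) -> R}.
Hypothesis dL : forall z, differentiable L z.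

Lemma dot_saddle_op z : dot (saddle_op L z) (saddle_op L z) = dot (grad L z) (grad L z).
Proof. by rewrite dot_row_mx dotNl dotNr opprK -dot_row_mx hsubmxK. Qed.

Lemma saddle_op_gap z w : convex_concave L ->
  L (row_mx (lsubmx z) (rsubmx w)) - L (row_mx (lsubmx w) (rsubmx z))
    <= dot (saddle_op L z) (z - w).
Proof.
move=> [cvx ccv].
rewrite -[z]hsubmxK -[w]hsubmxK !row_mxKl !row_mxKr.
move: (lsubmx z) (rsubmx z) (lsubmx w) (rsubmx w) => x y x' y'.
have shift (a a' : 'rV[R]_n) (b b' : 'rV[R]_m) (h : R) :
    h *: row_mx a b + row_mx a' b' = row_mx (h *: a + a') (h *: b + b').
  by rewrite scale_row_mx add_row_mx.
have interp k (u u' : 'rV[R]_k) (h : R) : h *: (u - u') + u' = h *: u + (1 - h) *: u'.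
  by rewrite scalerBr scalerBl scale1r addrA addrAC.
have Dx : 'D_(row_mx (x' - x) 0) L (row_mx x y) <= L (row_mx x' y) - L (row_mx x y).
  apply: derive_le_of_increment (diff_derivable (dL _)) _ => h /andP[h_gt0 h_lt1].
  rewrite shift interp scaler0 add0r.
  have := cvx y x' x h; rewrite (ltW h_gt0) (ltW h_lt1) => /(_ isT); lra.
have Dy : L (row_mx x y') - L (row_mx x y) <= 'D_(row_mx 0 (y' - y)) L (row_mx x y).
  apply: derive_ge_of_increment (diff_derivable (dL _)) _ => h /andP[h_gt0 h_lt1].
  rewrite shift interp scaler0 add0r.
  have := ccv x y' y h; rewrite (ltW h_gt0) (ltW h_lt1) => /(_ isT); lra.
rewrite !derive_grad // -[grad L _]hsubmxK !dot_row_mx !dot0l addr0 add0r in Dx Dy.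
rewrite opp_row_mx add_row_mx dot_row_mx dotNl.
rewrite (dotC (x' - x)) (dotC (y' - y)) in Dx Dy.
rewrite -[x - x']opprB -[y - y']opprB !dotNr.
lra.
Qed.

Lemma saddle_op_monotone z w : convex_concave L ->
  0 <= dot (saddle_op L z) (z - w) + dot (saddle_op L w) (w - z).
Proof.
by move=> ccL; have := saddle_op_gap z w ccL; have := saddle_op_gap w z ccL; lra.
Qed.

Lemma saddle_op_dot_ge0 zs z : convex_concave L -> saddle_point L zs ->
  0 <= dot (saddle_op L z) (z - zs).
Proof.
move=> ccL sp; have := saddle_op_gap z zs ccL.
by have [+ _] := sp (lsubmx z) (rsubmx z); have [_ +] := sp (lsubmx z) (rsubmx z); lra.
Qed.

Lemma saddle_op_saddle_point zs : saddle_point L zs -> saddle_op L zs = 0.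
Proof.
move=> sp; set gx := lsubmx (grad L zs); set gy := rsubmx (grad L zs).
have Dgrad a b : 'D_(row_mx a b) L zs = dot a gx + dot b gy.
  by rewrite derive_grad // -[grad L zs]hsubmxK dot_row_mx.
have shift a b (h : R) :
    h *: row_mx a b + zs = row_mx (h *: a + lsubmx zs) (h *: b + rsubmx zs).
  by rewrite -{1}[zs]hsubmxK scale_row_mx add_row_mx.
have gx0 : dot gx gx <= 0.
  have : 0 <= 'D_(row_mx (- gx) 0) L zs.
    apply: derive_ge_of_increment (diff_derivable (dL _)) _ => h _.
    by rewrite mulr0 subr_ge0 shift scaler0 add0r; case: (sp (h *: - gx + lsubmx zs) 0).
  by rewrite Dgrad dotNl dot0l addr0 oppr_ge0.
have gy0 : dot gy gy <= 0.
  have : 'D_(row_mx 0 gy) L zs <= 0.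
    apply: derive_le_of_increment (diff_derivable (dL _)) _ => h _.
    by rewrite mulr0 subr_le0 shift scaler0 add0r; case: (sp 0 (h *: gy + rsubmx zs)).
  by rewrite Dgrad dot0l add0r.
have [gx_eq0 gy_eq0] : gx = 0 /\ gy = 0.
  by split; apply/eqP; rewrite -dotxx_eq0 eq_le dotxx_ge0 ?gx0 ?gy0.
by rewrite /saddle_op -/gx -/gy gx_eq0 gy_eq0 oppr0 row_mx0.
Qed.

Lemma saddle_op_lipschitz_sqr {Rs : R} : smooth_cc Rs L -> forall z w,
  dot (saddle_op L z - saddle_op L w) (saddle_op L z - saddle_op L w)
    <= Rs ^+ 2 * dot (z - w) (z - w).
Proof.
move=> [_ lip] z w; rewrite -!enorm_sqr -exprMn ler_sqr ?nnegrE ?sqrtr_ge0 ?lip //.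
exact: le_trans (sqrtr_ge0 _) (lip z w).
Qed.

End SaddleOperator.

Lemma eagc_potential_le {R : realType} {n m : nat} {Rs : R} {L : 'rV[R]_(n + m) -> R}
    {alpha : R} (z0 : 'rV[R]_(n + m)) :
  smooth_cc Rs L -> convex_concave L -> 0 < alpha -> (alpha * Rs) ^+ 2 <= 1/49 ->
  forall k, let zk := eagc L alpha z0 k in
    eag_potential alpha k%:R z0 zk (saddle_op L zk)
      <= eag_potential alpha 0 z0 z0 (saddle_op L z0).
Proof.
move=> sm ccL alpha_gt0 small; elim=> [//|k IHk]; apply: le_trans IHk.
have k2E : k.+2%:R = k%:R + 2 :> R by rewrite -addn2 natrD.
rewrite -natr1 /= k2E.
apply: (@eag_potential_step _ _ alpha Rs k%:R z0 _ _ _ _ _ _ erefl erefl (ler0n _ k)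
  alpha_gt0 small).
- by rewrite addrC; exact: saddle_op_monotone sm.1 _ _ ccL.
- exact: saddle_op_lipschitz_sqr.
Qed.

Theorem theorem1 (R : realType) (n m : nat) (Rs : R)
  (L : 'rV[R]_(n + m) -> R) (zs : 'rV[R]_(n + m)) (alpha : R)
  (z0 : 'rV[R]_(n + m)) :
  0 < Rs ->
  smooth_cc Rs L ->
  convex_concave L ->
  saddle_point L zs ->
  0 < alpha ->
  0 <= 1 - 3 * alpha * Rs - alpha ^+ 2 * Rs ^+ 2 - alpha ^+ 3 * Rs ^+ 3 ->
  0 <= 1 - 8 * alpha * Rs + alpha ^+ 2 * Rs ^+ 2 - 2 * alpha ^+ 3 * Rs ^+ 3 ->
  forall k : nat,
    enorm (grad L (eagc L alpha z0 k)) ^+ 2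
      <= 4 * (1 + alpha * Rs + alpha ^+ 2 * Rs ^+ 2)
           / (alpha ^+ 2 * (1 + alpha * Rs))
         * (enorm (z0 - zs) ^+ 2 / (k.+1%:R) ^+ 2).
Proof.
move=> Rs_gt0 sm ccL sp alpha_gt0 _ cond k.
have aRs_ge0 : 0 <= alpha * Rs by rewrite mulr_ge0 ?ltW.
have aRs_le : alpha * Rs <= 1/7 by exact: stepsize_le.
have small : (alpha * Rs) ^+ 2 <= 1/49 by nra.
have potential_k := eagc_potential_le z0 sm ccL alpha_gt0 small k.
have potential_0 : eag_potential alpha 0 z0 z0 (saddle_op L z0)
    <= alpha * (5/8) * Rs ^+ 2 * dot (z0 - zs) (z0 - zs).
  have c_gt0 : 0 < alpha * (5/8) by apply: mulr_gt0 => //; lra.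
  rewrite eag_potential0 -[X in _ <= X]mulrA ler_pM2l //.
  have := saddle_op_lipschitz_sqr sm z0 zs.
  by rewrite (saddle_op_saddle_point sm.1 zs sp) subr0.
have lower := @eag_potential_ge _ _ alpha k%:R z0 _ zs _ alpha_gt0 (ler0n _ k)
  (saddle_op_dot_ge0 sm.1 zs (eagc L alpha z0 k) ccL sp).
rewrite !enorm_sqr -dot_saddle_op -[k.+1%:R]natr1.
apply: eag_rate_bound => //; [exact: ltW | lra | exact: dotxx_ge0 |].
exact: le_trans lower (le_trans potential_k potential_0).
Qed.
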